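(* Let $P\in\mathfrak N^{Seg}_2$ with $h_P\ge2$ and $P(0)\cup P(1)$ of type $3C$. Then $P$ has a retract $R$ with $R(0)\cup R(1)$ a 4-crown if and only if $P(2\to h_P)$ has a retract $T$ whose set of minimal elements $T(0)$ is a 2-element antichain.
   Context: All posets are finite; $h_P$ is the height; level sets $P(0)=\min P$, $P(k+1)=\min(P\setminus\bigcup_{i\le k}P(i))$; $P(k\to\ell)=\bigcup_{i=k}^\ell P(i)$ as induced subposet. Level sets of a retract refer to its own levels. A retract is the image of an idempotent order-preserving self-map. A 4-crown is the ordinal sum of two 2-element antichains; type $3C$ means three disjoint 2-element chains with no further comparabilities; a 6-crown is $x_0<y_0>x_1<y_1>x_2<y_2>x_0$ with no other comparabilities. A section of width three is a poset $P$ of height $h_P\ge1$ with carrier $\{c_{k,j}:k\in[0,h_P],j\in\{0,1,2\}\}$ such that: $c_{0,j}<\dots<c_{h_P,j}$ for each $j$; each $\{c_{k,0},c_{k,1},c_{k,2}\}$ is an antichain; $c_{k,i}<c_{\ell,j}\Rightarrow c_{k,i+1}<c_{\ell,j+1}$ (indices mod 3); and for no $k$ is every point of $P(k)$ below every point of $P(k+1)$. It is nice if for all $x<y$: $\{z:z>x\}\not\subseteq\{z:z\ge y\}$ and $\{z:z<y\}\not\subseteq\{z:z\le x\}$. $\mathfrak N_2$ is the class of nice sections of width three of height $\ge2$ with horizon 2 (every point of $P(k)$ is below every point of $P(\ell)$ whenever $\ell\ge k+2$). $\mathfrak N^{Seg}_2=\{P(1\to h_P-1):P\in\mathfrak N_2\}$.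 *)

From mathcomp Require Import all_boot.
Set Implicit Arguments. Unset Strict Implicit. Unset Printing Implicit Defensive.

(* A finite poset is a finType T with a boolean order relation [le];
   subposets are subsets [S : {set T}] with the induced order. *)
Section Posets.
Variables (T : finType) (le : rel T).

Definition is_poset : Prop :=
  [/\ reflexive le, antisymmetric le & transitive le].

Definition lt (x y : T) : bool := (x != y) && le x y.

Definition minset (S : {set T}) : {set T} :=
  [set x in S | [forall y in S, ~~ lt y x]].

Fixpoint rest (S : {set T}) (k : nat) : {set T} :=
  match k with
  | 0 => S
  | k'.+1 => rest S k' :\: minset (rest S k')
  end.

Definition level (S : {set T}) (k : nat) : {set T} := minset (rest S k).

(* height h_S : the largest k with S(k) nonempty (levels are empty beyond #|T|) *)
Definition height (S : {set T}) : nat :=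
  \max_(k < #|T| | level S k != set0) (k : nat).

Definition segment (S : {set T}) (k l : nat) : {set T} :=
  \bigcup_(k <= i < l.+1) level S i.

Definition is_retract (S R : {set T}) : Prop :=
  exists f : T -> T,
    [/\ {in S, forall x, f x \in S},
        {in S &, forall x y, le x y -> le (f x) (f y)},
        {in S, forall x, f (f x) = f x} &
        R = f @: S].

Definition crown4 (A : {set T}) : Prop :=
  exists a0 a1 b0 b1 : T,
    [/\ uniq [:: a0; a1; b0; b1],
        A = [set a0; a1; b0; b1] &
        {in A &, forall x y, lt x y = (x \in [set a0; a1]) && (y \in [set b0; b1])}].

Definition type3C (A : {set T}) : Prop :=
  exists a0 b0 a1 b1 a2 b2 : T,
    [/\ uniq [:: a0; b0; a1; b1; a2; b2],
        A = [set a0; b0; a1; b1; a2; b2] &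
        {in A &, forall x y,
           lt x y = [|| (x == a0) && (y == b0), (x == a1) && (y == b1)
                      | (x == a2) && (y == b2)]}].

Definition antichain2 (A : {set T}) : Prop :=
  exists a b : T, [/\ a != b, A = [set a; b], ~~ le a b & ~~ le b a].

Definition nice : Prop :=
  forall x y : T, lt x y ->
    (exists z, lt x z && ~~ le y z) /\ (exists z, lt z y && ~~ le z x).

Definition horizon2 : Prop :=
  forall k l : nat, k.+2 <= l ->
    {in level setT k & level setT l, forall x y, lt x y}.

End Posets.

(* Carrier of a section of width three of height h: c_{k,j} = (k, j) *)
Definition sec_carrier (h : nat) : finType := ('I_h.+1 * 'I_3)%type.

Definition is_section3 (h : nat) (le : rel (sec_carrier h)) : Prop :=
  [/\ is_poset le, 1 <= h & height le setT = h] /\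
  [/\
      (forall (j : 'I_3) (k k' : 'I_h.+1), k < k' -> lt le (k, j) (k', j)),
      (forall (k : 'I_h.+1) (i j : 'I_3), i != j -> ~~ le (k, i) (k, j)),
      (forall (k l : 'I_h.+1) (i j : 'I_3),
          lt le (k, i) (l, j) -> lt le (k, ordS i) (l, ordS j)) &
      (forall k : nat, k < h ->
          ~ {in level le setT k & level le setT k.+1, forall x y, lt le x y})].

Definition in_N2 (h : nat) (le : rel (sec_carrier h)) : Prop :=
  [/\ is_section3 le, nice le, 2 <= h & horizon2 le].

(* Write P' = P(2 -> h_P) for the tail of P.  By horizon 2 every point of P(0) lies
   below all of P', and P' is an up-set of P.

   If r retracts P onto R with R(0) u R(1) a 4-crown {a0,a1} < {b0,b1}, then b0, b1
   lie in P', because in a 3C no point of P(1) is above two points of P(0).  No point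
   y of P' is mapped into R(0): the images of P(0) reach both a0 and a1 and lie below
   r y.  Hence r restricts to a retraction of P' whose minimal level is {b0,b1}.

   Conversely, retract the 3C onto two of its minimal points by collapsing one chain
   onto x0 and the other two onto x1, and glue this with a retraction of P' onto T;
   the image has levels {x0,x1} < T(0), a 4-crown. *)

From Pilot Require Import Defs.
From mathcomp Require Import all_boot.
Set Implicit Arguments. Unset Strict Implicit. Unset Printing Implicit Defensive.

Section PosetLevels.
Variables (T : finType) (le : rel T).
Hypothesis le_po : is_poset le.
Implicit Types (S U A X Y : {set T}) (x y z : T).

Local Notation lt := (lt le).
Local Notation minset := (Defs.minset le).
Local Notation rest := (rest le).
Local Notation level := (level le).

Lemma le_refl x : le x x. Proof. by case: le_po. Qed.

Lemma le_trans y x z : le x y -> le y z -> le x z.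
Proof. by case: le_po => _ _; apply. Qed.

Lemma le_anti x y : le x y -> le y x -> x = y.
Proof. by case: le_po => _ anti _ lexy leyx; apply: anti; rewrite lexy. Qed.

Lemma ltW x y : lt x y -> le x y. Proof. by case/andP. Qed.

Lemma lt_irr x : lt x x = false. Proof. by rewrite /lt eqxx. Qed.

Lemma le_lt_trans y x z : le x y -> lt y z -> lt x z.
Proof.
move=> lexy /andP[neyz leyz]; rewrite /lt (le_trans lexy leyz) andbT.
by apply/eqP => exz; subst z; move/eqP: neyz; apply; apply: le_anti.
Qed.

Lemma minsetP S x :
  reflect (x \in S /\ {in S, forall y, ~~ lt y x}) (x \in minset S).
Proof.
by rewrite inE; apply: (iffP andP) => -[xS minx]; split=> //; apply/forall_inP.
Qed.

Lemma minset_sub S : minset S \subset S.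
Proof. by apply/subsetP => x /minsetP[]. Qed.

Lemma minset_le_eq S x y : x \in minset S -> y \in S -> le y x -> y = x.
Proof.
case/minsetP=> _ minx yS leyx; apply/eqP.
by move: (minx y yS); rewrite /lt leyx andbT negbK.
Qed.

(* An element minimising the number of elements strictly below it is minimal. *)
Lemma minset_below S x : x \in S -> exists2 y, y \in minset S & le y x.
Proof.
move=> xS; pose below y := #|[set z in S | lt z y]|.
have xP : (x \in S) && le x x by rewrite xS le_refl.
case: (@arg_minnP _ x (fun y => (y \in S) && le y x) below xP) => y /andP[yS leyx] miny.
exists y => //; apply/minsetP; split=> // z zS; apply/negP => ltzy.
have /miny : (z \in S) && le z x by rewrite zS (le_trans (ltW ltzy) leyx).
rewrite leqNgt => /negP; apply; apply: proper_card; apply/properP; split.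
  apply/subsetP => w; rewrite !inE => /andP[-> ltwz] /=.
  exact: le_lt_trans (ltW ltwz) ltzy.
by exists z; rewrite !inE ?zS ?ltzy ?lt_irr.
Qed.

Lemma minset_eq_sub X Y : X \subset Y -> minset Y \subset X -> minset X = minset Y.
Proof.
move=> XY minYX; apply/setP => x; apply/minsetP/minsetP => [[xX minx]|[xY miny]].
  split=> [|y yY]; first exact: subsetP XY x xX.
  apply/negP => ltyx; have [z zmin lezy] := minset_below yY.
  by move: (minx z (subsetP minYX z zmin)); rewrite (le_lt_trans lezy ltyx).
by split=> [|y /(subsetP XY)]; [apply: (subsetP minYX); apply/minsetP | apply: miny].
Qed.

Lemma minset_setD_upclosed S U :
  {in U & S, forall u x, le u x -> x \in U} -> minset (S :\: U) = minset S :\: U.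
Proof.
move=> Uup; apply/setP => x; rewrite [in RHS]inE.
apply/minsetP/andP => [[/setDP[xS xU] minx]|[xU /minsetP[xS minx]]].
  split=> //; apply/minsetP; split=> // y yS; apply/negP => ltyx.
  have yU : y \in U by apply: contraLR ltyx => yU; apply: minx; rewrite inE yU.
  by move/negP: xU; apply; apply: Uup yU xS (ltW ltyx).
by split=> [|y /setDP[yS _]]; [rewrite inE xU | apply: minx].
Qed.

(** * Levels of a finite poset *)

Lemma rest_subset S j k : j <= k -> rest S k \subset rest S j.
Proof.
move/subnKC <-; elim: (k - j) => [|n IHn]; first by rewrite addn0.
by rewrite addnS; apply: subset_trans IHn; apply: subsetDl.
Qed.

Lemma rest_sub S k : rest S k \subset S.
Proof. exact: (rest_subset S (leq0n k)). Qed.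

Lemma level_mem S k x : x \in level S k -> x \in S.
Proof. by move/(subsetP (minset_sub _))/(subsetP (rest_sub S k)). Qed.

Lemma card_rest S k : #|rest S k| <= #|S| - k.
Proof.
elim: k => [|k IHk]; first by rewrite subn0 subset_leq_card.
have [r0|[x xr]] := set_0Vmem (rest S k); first by rewrite /= r0 set0D cards0.
have [y ymin _] := minset_below xr.
have lt_card : #|rest S k.+1| < #|rest S k|.
  apply: proper_card; apply/properP; split; first exact: subsetDl.
  exists y; last by rewrite inE ymin.
  exact: (subsetP (minset_sub _)).
by rewrite subnS -ltnS; apply: leq_trans lt_card (leq_trans IHk (leqSpred _)).
Qed.

Lemma rest_index_lt S k x : x \in rest S k -> k < #|S|.
Proof.
move=> xr; have : 0 < #|rest S k| by apply/card_gt0P; exists x.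
by move/leq_trans/(_ (card_rest S k)); rewrite subn_gt0.
Qed.

Lemma level_exists S x : x \in S -> exists k, x \in level S k.
Proof.
move=> xS; have stuck : exists n, x \notin rest S n.
  by exists #|S|; apply/negP => /rest_index_lt; rewrite ltnn.
case: (ex_minnP stuck) => -[|n]; first by rewrite xS.
move=> xn minn; exists n; have : x \in rest S n.
  by apply: contraTT isT => /minn; rewrite ltnn.
by move: xn; rewrite /= inE => /nandP[/negbNE|/negP].
Qed.

Lemma mem_rest S j n x : x \in level S j -> (x \in rest S n) = (n <= j).
Proof.
move=> xj; case: leqP => [nj|jn].
  exact: subsetP (rest_subset S nj) x (subsetP (minset_sub _) x xj).
apply/negP => /(subsetP (rest_subset S jn)).
by rewrite /= inE xj.
Qed.

Lemma level_inj S j k x : x \in level S j -> x \in level S k -> j = k.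
Proof.
move=> xj xk; apply/eqP; rewrite eqn_leq -(mem_rest j xk) -(mem_rest k xj).
by rewrite (subsetP (minset_sub _) x xj) (subsetP (minset_sub _) x xk).
Qed.

Lemma level_lt S j k x y : lt y x -> y \in level S j -> x \in level S k -> j < k.
Proof.
move=> ltyx yj /minsetP[_ minx]; rewrite ltnNge; apply/negP => kj.
by move: (minx y); rewrite (mem_rest k yj) kj ltyx => /(_ isT).
Qed.

Lemma level_leq S j k x y : le y x -> y \in level S j -> x \in level S k -> j <= k.
Proof.
move=> leyx yj xk; case: (eqVneq y x) => [eyx|neyx].
  by rewrite (level_inj yj (_ : y \in level S k)) // eyx.
by apply/ltnW/(level_lt _ yj xk); rewrite /lt neyx.
Qed.

Lemma rest_upclosed S k u x : u \in rest S k -> x \in S -> le u x -> x \in rest S k.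
Proof.
move=> ur xS leux; have [i ui] := level_exists (subsetP (rest_sub S k) u ur).
have [j xj] := level_exists xS.
by rewrite (mem_rest k xj) (leq_trans _ (level_leq leux ui xj)) // -(mem_rest k ui).
Qed.

Lemma level_height S k x : x \in level S k -> k <= height le S.
Proof.
move=> xk; have kT : k < #|T|.
  apply: leq_trans (rest_index_lt (subsetP (minset_sub _) x xk)) (max_card _).
by rewrite /height (bigmax_sup (Ordinal kT)) //; apply/set0Pn; exists x.
Qed.

Lemma rest_rest S j k : rest (rest S j) k = rest S (j + k).
Proof. by elim: k => [|k IHk]; rewrite ?addn0 // addnS /= IHk. Qed.

Lemma rest_setD_upclosed S U k :
  {in U & S, forall u x, le u x -> x \in U} -> rest (S :\: U) k = rest S k :\: U.
Proof.
move=> Uup; elim: k => [//|k IHk] /=; rewrite IHk minset_setD_upclosed.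
  by apply/setP => x; rewrite !inE; case: (x \in U); rewrite ?andbF.
by move=> u x uU /(subsetP (rest_sub S k)); apply: Uup.
Qed.

Lemma mem_segment S k l x :
  (x \in segment le S k l) = has (fun i => x \in level S i) (index_iota k l.+1).
Proof.
rewrite /segment -big_has.
exact: (big_morph (fun A : {set T} => x \in A) (in_setU x) (in_set0 x)).
Qed.

Lemma segmentE S k l : segment le S k l = rest S k :\: rest S l.+1.
Proof.
apply/setP => x; rewrite mem_segment inE; apply/hasP/andP.
  case=> i; rewrite mem_index_iota => /andP[ki ilt] xi.
  by rewrite (mem_rest _ xi) (mem_rest _ xi) ki -ltnNge.
case=> xl xk; have [i xi] := level_exists (subsetP (rest_sub S k) x xk).
exists i => //.
by rewrite mem_index_iota -(mem_rest k xi) xk ltnNge -(mem_rest l.+1 xi) xl.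
Qed.

Lemma level_segment S k l i : level (segment le S k l) i \subset level S (k + i).
Proof.
rewrite segmentE /level rest_setD_upclosed ?rest_rest ?minset_setD_upclosed.
- exact: subsetDl.
- by move=> u x ur /(subsetP (rest_sub S _)); apply: rest_upclosed.
by move=> u x ur /(subsetP (rest_sub S _)); apply: rest_upclosed.
Qed.

Lemma segment_height S k : segment le S k (height le S) = rest S k.
Proof.
rewrite segmentE; apply/setP => x; rewrite inE andbC; case xk: (x \in rest S k) => //.
have [i xi] := level_exists (subsetP (rest_sub S k) x xk).
by rewrite (mem_rest _ xi) -ltnNge ltnS (level_height xi).
Qed.

Lemma horizon2_segment_level0_lt_rest2 k l :
  horizon2 le ->
  {in level (segment le setT k l) 0 & rest (segment le setT k l) 2, forall x y, lt x y}.
Proof.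
move=> hor2 x y x0 y2; have [j yj] := level_exists (subsetP (rest_sub _ 2) y y2).
apply: (hor2 (k + 0) (k + j)); first by rewrite addn0 -addn2 leq_add2l -(mem_rest 2 yj).
  exact: subsetP (level_segment _ _ _ _) x x0.
exact: subsetP (level_segment _ _ _ _) y yj.
Qed.

Lemma rest2E S : rest S 2 = S :\: (level S 0 :|: level S 1).
Proof. by rewrite /= setDDl. Qed.

Lemma level0_of_no_lower S x :
  x \in level S 0 :|: level S 1 -> {in level S 0 :|: level S 1, forall y, ~~ lt y x} ->
  x \in level S 0.
Proof.
case/setUP=> [//|x1] nolower; have [y y0 leyx] := minset_below (level_mem x1).
have y01 : y \in level S 0 :|: level S 1 by rewrite inE y0.
move: (nolower y y01); rewrite /lt leyx andbT negbK => /eqP eyx.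
by rewrite -eyx in x1; have := level_inj (y0 : y \in level S 0) x1.
Qed.

Lemma level1_of_lower S x y :
  x \in level S 0 :|: level S 1 -> y \in S -> lt y x -> x \in level S 1.
Proof.
case/setUP=> [/minsetP[_ minx]|//] yS ltyx.
by move: (minx y yS); rewrite ltyx.
Qed.

Lemma lt_levels01 S x y :
  x \in level S 0 :|: level S 1 -> y \in level S 0 :|: level S 1 -> lt x y ->
  x \in level S 0 /\ y \in level S 1.
Proof.
move=> x01 y01 ltxy; have xS : x \in S by case/setUP: x01 => /level_mem.
have y1 := level1_of_lower y01 xS ltxy; split=> //.
by case/setUP: x01 => // x1; have := level_lt ltxy x1 y1.
Qed.

Lemma antichain2_levelP S k :
  antichain2 le (level S k) <-> exists t0 t1, t0 != t1 /\ level S k = [set t0; t1].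
Proof.
split=> [[t0 [t1 [nt01 Lk _ _]]]|[t0 [t1 [nt01 Lk]]]]; first by exists t0, t1.
have tk t : t \in [set t0; t1] -> t \in level S k by rewrite Lk.
have t0k : t0 \in level S k by apply: tk; rewrite !inE eqxx.
have t1k : t1 \in level S k by apply: tk; rewrite !inE eqxx orbT.
exists t0, t1; split=> //; apply: contra nt01 => let01; apply/eqP.
- exact: minset_le_eq t1k (subsetP (minset_sub _) _ t0k) let01.
- by apply/esym; apply: minset_le_eq t0k (subsetP (minset_sub _) _ t1k) let01.
Qed.

Lemma crown4_levels01P S :
  crown4 le (level S 0 :|: level S 1) <->
  exists a0 a1 b0 b1, [/\ a0 != a1, b0 != b1, level S 0 = [set a0; a1],
    level S 1 = [set b0; b1] & {in [set a0; a1] & [set b0; b1], forall a b, lt a b}].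
Proof.
split=> [[a0 [a1 [b0 [b1 [uniq_ab L01E ltE]]]]]|].
  set A := [set a0; a1] in ltE *; set B := [set b0; b1] in ltE *.
  have mem01 x : (x \in level S 0 :|: level S 1) = (x \in A) || (x \in B).
    by rewrite L01E !inE !orbA.
  have [na01 nb01 nAB] : [/\ a0 != a1, b0 != b1 & {in A, forall x, x \notin B}].
    move: uniq_ab; rewrite /= !inE !negb_or -!andbA.
    case/and5P=> -> a0b0 a0b1 a1b0 /and3P[a1b1 -> _].
    by split=> // x /set2P[]->; rewrite !inE negb_or ?a0b0 ?a0b1 ?a1b0 ?a1b1.
  have A0 : {subset A <= level S 0}.
    move=> a aA; apply: level0_of_no_lower; first by rewrite mem01 aA.
    have a01 : a \in level S 0 :|: level S 1 by rewrite mem01 aA.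
    by move=> y y01; rewrite ltE // (negbTE (nAB a aA)) andbF.
  have a0A : a0 \in A by rewrite !inE eqxx.
  have B1 : {subset B <= level S 1}.
    move=> b bB; have b01 : b \in level S 0 :|: level S 1 by rewrite mem01 bB orbT.
    apply: (level1_of_lower b01 (level_mem (A0 a0 a0A))).
    by rewrite ltE ?a0A ?bB // mem01 a0A.
  exists a0, a1, b0, b1; split=> //.
  - apply/setP => z; apply/idP/idP => [z0|]; last exact: A0.
    have : z \in level S 0 :|: level S 1 by rewrite inE z0.
    rewrite mem01 => /orP[//|/B1 z1]; by have := level_inj z0 z1.
  - apply/setP => z; apply/idP/idP => [z1|]; last exact: B1.
    have : z \in level S 0 :|: level S 1 by rewrite inE z1 orbT.
    rewrite mem01 => /orP[/A0 z0|//]; by have := level_inj z0 z1.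
  - by move=> a b aA bB; rewrite ltE ?aA ?bB // mem01 ?aA ?bB ?orbT.
case=> a0 [a1 [b0 [b1 [na01 nb01 L0E L1E ltAB]]]].
have nab a b : a \in [set a0; a1] -> b \in [set b0; b1] -> a != b.
  rewrite -L0E -L1E => aL0 bL1; apply/eqP => eab; rewrite eab in aL0.
  by have := level_inj aL0 bL1.
exists a0, a1, b0, b1; split.
- rewrite /= !inE !negb_or na01 nb01 !nab ?inE ?eqxx ?orbT //.
- by rewrite L0E L1E; apply/setP => z; rewrite !inE !orbA.
move=> x y x01 y01; apply/idP/andP => [/(lt_levels01 x01 y01)|[xA yB]].
  by rewrite -L0E -L1E.
exact: ltAB.
Qed.

Lemma type3C_lt_inj A :
  type3C le A -> {in A & A & A, forall u u' v, lt u v -> lt u' v -> u = u'}.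
Proof.
case=> x0 [y0 [x1 [y1 [x2 [y2 [uniq_xy _ ltE]]]]]] u u' v uA u'A vA.
rewrite !ltE //.
case/or3P=> /andP[/eqP-> /eqP->]; case/or3P=> /andP[/eqP-> /eqP yy] //;
  by move: uniq_xy; rewrite yy /= !inE !eqxx ?orbT ?andbF.
Qed.

(* In a 3C, collapsing the chain through x0 onto x0 and the two others onto x1
   is a retraction, since no comparability crosses between chains. *)
Lemma type3C_retract S :
  type3C le (level S 0 :|: level S 1) ->
  exists x0 x1, [/\ x0 != x1, x0 \in level S 0, x1 \in level S 0 &
                    is_retract le (level S 0 :|: level S 1) [set x0; x1]].
Proof.
case=> x0 [y0 [x1 [y1 [x2 [y2 [uniq_xy L01E ltE]]]]]].
move: (uniq_xy); rewrite /= !inE !negb_or.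
case/and5P=> /and5P[x0y0 x0x1 x0y1 _ x0y2] /and4P[y0x1 _ _ _] /and3P[x1y1 _ x1y2] _ _.
have memC z : z \in [set x0; y0; x1; y1; x2; y2] -> z \in level S 0 :|: level S 1.
  by rewrite L01E.
have x0C : x0 \in level S 0 :|: level S 1 by apply: memC; rewrite !inE eqxx.
have x1C : x1 \in level S 0 :|: level S 1 by apply: memC; rewrite !inE eqxx !orbT.
pose r z := if (z == x0) || (z == y0) then x0 else x1.
have rC z : r z \in [set x0; x1] by rewrite /r; case: ifP; rewrite !inE eqxx ?orbT.
have r_x0 : r x0 = x0 by rewrite /r eqxx.
have r_off z : z \in [:: x1; y1; x2; y2] -> r z = x1.
  move: uniq_xy => /= /andP[x0n /andP[y0n _]] zs.
  have zx0 : (z == x0) = false by apply: contraNF x0n => /eqP <-; rewrite in_cons zs orbT.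
  have zy0 : (z == y0) = false by apply: contraNF y0n => /eqP <-.
  by rewrite /r zx0 zy0.
have r_x1 : r x1 = x1 by rewrite r_off // inE eqxx.
exists x0, x1; split=> //.
- apply: (level0_of_no_lower x0C) => y yC.
  by rewrite ltE // (negbTE x0y0) (negbTE x0y1) (negbTE x0y2) !andbF.
- apply: (level0_of_no_lower x1C) => y yC.
  by rewrite ltE // [x1 == y0]eq_sym (negbTE y0x1) (negbTE x1y1) (negbTE x1y2) !andbF.
exists r; split.
- by move=> z _; case/set2P: (rC z) => ->.
- move=> u v uC vC leuv; case: (eqVneq u v) => [<-|neuv]; first exact: le_refl.
  have : lt u v by rewrite /lt neuv.
  rewrite ltE // => /or3P[]/andP[/eqP-> /eqP->].
  + by rewrite /r !eqxx orbT le_refl.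
  + by rewrite !r_off ?le_refl // !inE eqxx ?orbT.
  + by rewrite !r_off ?le_refl // !inE eqxx ?orbT.
- by move=> z _; case/set2P: (rC z) => ->.
apply/setP => z; apply/idP/imsetP => [/set2P[]->|[c _ ->]]; last exact: rC.
  by exists x0.
by exists x1.
Qed.

(** * Retracts of P and of its tail P(2 -> h) *)

Section Tail.
Variable P : {set T}.

Local Notation C := (level P 0 :|: level P 1).
Local Notation tail := (rest P 2).

Lemma above_two_in_tail a0 a1 b :
  {in C & C & C, forall u u' v, lt u v -> lt u' v -> u = u'} ->
  a0 != a1 -> a0 \in P -> a1 \in P -> b \in P -> lt a0 b -> lt a1 b -> b \in tail.
Proof.
move=> lt_inj na01 a0P a1P bP lta0b lta1b; rewrite rest2E // inE bP andbT.
apply/negP => bC; have b1 : b \in level P 1 by apply: level1_of_lower lta0b.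
have below0 a : a \in P -> lt a b -> a \in C.
  move=> aP ltab; have [j aj] := level_exists aP.
  by move: (level_lt ltab aj b1); rewrite ltnS leqn0 => /eqP j0; rewrite inE -j0 aj.
have ea01 : a0 = a1 by apply: (lt_inj _ _ _ _ _ bC lta0b lta1b); apply: below0.
by rewrite ea01 eqxx in na01.
Qed.

Lemma mem_tail x : (x \in tail) = (x \notin C) && (x \in P).
Proof. by rewrite rest2E inE. Qed.

Lemma levels01_sub : C \subset P.
Proof. by apply/subsetP => x /setUP[]/level_mem. Qed.

Hypothesis level0_lt_tail : {in level P 0 & tail, forall x y, lt x y}.

Section RetractOfP.
Variable f : T -> T.
Hypotheses (fP : {in P, forall x, f x \in P})
  (f_mono : {in P &, forall x y, le x y -> le (f x) (f y)})
  (f_idem : {in P, forall x, f (f x) = f x}).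

Local Notation R := (f @: P).

Lemma retract_sub : R \subset P.
Proof. by apply/subsetP => _ /imsetP[x xP ->]; apply: fP. Qed.

Lemma retract_fixed : {in R, forall r, f r = r}.
Proof. by move=> _ /imsetP[x xP ->]; apply: f_idem. Qed.

(* Each minimal a of R is f c for some c in P(0) below a; since c lies below the
   whole tail, f c <= f y, so a minimal f y would equal every minimal point of R. *)
Lemma retract_tail_avoids_level0 :
  1 < #|level R 0| -> {in tail, forall y, f y \notin level R 0}.
Proof.
move=> R0_gt1 y yt; apply/negP => fy0.
have yP : y \in P := subsetP (rest_sub P 2) y yt.
have min_eq a : a \in level R 0 -> a = f y.
  move=> a0; have aR : a \in R := level_mem a0.
  have [c cmin leca] := minset_below (subsetP retract_sub a aR).
  have cP : c \in P := subsetP (minset_sub P) c cmin.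
  have fcR : f c \in R := imset_f f cP.
  have <- : f c = a.
    apply: minset_le_eq a0 fcR _; rewrite -(retract_fixed aR).
    exact: f_mono cP (subsetP retract_sub a aR) leca.
  exact: minset_le_eq fy0 fcR (f_mono cP yP (ltW (level0_lt_tail cmin yt))).
case/card_gt1P: R0_gt1 => a [a' [a0 a'0 naa']].
by rewrite (min_eq a a0) (min_eq a' a'0) eqxx in naa'.
Qed.

Hypotheses (R0_gt1 : 1 < #|level R 0|) (R1_tail : level R 1 \subset tail).

Lemma retract_maps_tail : {in tail, forall y, f y \in tail}.
Proof.
move=> y yt; have fyR : f y \in R := imset_f f (subsetP (rest_sub P 2) y yt).
have fy1 : f y \in rest R 1.
  by rewrite /= inE fyR andbT (retract_tail_avoids_level0 R0_gt1 yt).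
have [z z1 lezfy] := minset_below fy1.
exact: rest_upclosed (subsetP R1_tail z z1) (subsetP retract_sub _ fyR) lezfy.
Qed.

Lemma level0_retract_tail : level (f @: tail) 0 = level R 1.
Proof.
apply: minset_eq_sub; apply/subsetP => x.
  case/imsetP=> y yt ->; rewrite /= inE (retract_tail_avoids_level0 R0_gt1 yt).
  exact: imset_f (subsetP (rest_sub P 2) y yt).
move=> x1; have xR : x \in R := level_mem x1.
by rewrite -(retract_fixed xR); apply: imset_f; apply: (subsetP R1_tail).
Qed.

Lemma tail_retract : is_retract le tail (f @: tail).
Proof.
have tailP : {subset tail <= P} by apply/subsetP/rest_sub.
exists f; split=> // [|x y xt yt|x xt]; first exact: retract_maps_tail.
  by apply: f_mono; apply: tailP.
by apply: f_idem; apply: tailP.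
Qed.

End RetractOfP.

Lemma crown_retract_tail :
  {in C & C & C, forall u u' v, lt u v -> lt u' v -> u = u'} ->
  (exists R, is_retract le P R /\ crown4 le (level R 0 :|: level R 1)) ->
  exists R', is_retract le tail R' /\ antichain2 le (level R' 0).
Proof.
move=> lt_inj [_ [[f [fP f_mono f_idem ->]]]].
case/crown4_levels01P=> a0 [a1 [b0 [b1 [na01 nb01 L0E L1E ltab]]]].
have R0_gt1 : 1 < #|level (f @: P) 0| by rewrite L0E cards2 na01.
have R1_tail : level (f @: P) 1 \subset tail.
  apply/subsetP => b bR1; have bP := subsetP (retract_sub fP) b (level_mem bR1).
  have aP a : a \in [set a0; a1] -> a \in P.
    by rewrite -L0E => /level_mem /(subsetP (retract_sub fP)).
  have lt_b a : a \in [set a0; a1] -> lt a b by move=> aA; apply: ltab; rewrite -?L1E.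
  have a0A : a0 \in [set a0; a1] by rewrite !inE eqxx.
  have a1A : a1 \in [set a0; a1] by rewrite !inE eqxx orbT.
  exact: (above_two_in_tail lt_inj na01 (aP _ a0A) (aP _ a1A) bP
                            (lt_b _ a0A) (lt_b _ a1A)).
exists (f @: tail); split; first exact: tail_retract.
by apply/antichain2_levelP; exists b0, b1; rewrite level0_retract_tail.
Qed.

(* The glued map is monotone across the two pieces because P(0) lies below the
   whole tail and the tail is an up-set of P. *)
Lemma glue_retract A X :
  A \subset level P 0 -> is_retract le C A -> is_retract le tail X ->
  is_retract le P (A :|: X).
Proof.
move=> A0 [r [rC r_mono r_idem AE]] [g [gt g_mono g_idem ->]]; subst A.
pose f x := if x \in tail then g x else r x.
have tailP x : x \in tail -> x \in P by rewrite mem_tail => /andP[].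
have CnT x : x \in C -> x \notin tail by rewrite mem_tail => ->.
have fC x : x \in C -> f x = r x by move/CnT => xnt; rewrite /f (negbTE xnt).
have PC x : x \in P -> x \notin tail -> x \in C.
  by rewrite mem_tail => xP; rewrite xP andbT negbK.
have rP x : x \in C -> r x \in P by move/rC/(subsetP levels01_sub).
exists f; split.
- by move=> x xP; rewrite /f; case: ifP => [/gt/tailP|/negbT/(PC x xP)/rP].
- move=> x y xP yP lexy; rewrite /f.
  case: ifPn => xt; case: ifPn => yt.
  + exact: g_mono.
  + by move: (PC y yP yt) => /CnT; rewrite (rest_upclosed xt yP lexy).
  + apply/ltW/level0_lt_tail; last exact: gt.
    exact: subsetP A0 _ (imset_f r (PC x xP xt)).
  + exact: r_mono (PC x xP xt) (PC y yP yt) lexy.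
- move=> x xP; rewrite /f; case: (boolP (x \in tail)) => xt.
    by rewrite gt // g_idem.
  by rewrite (negbTE (CnT _ (rC _ (PC x xP xt)))) r_idem // PC.
apply/setP => z; apply/setUP/imsetP => [[]/imsetP[x xS ->]|[x xP ->]].
- by exists (r x); [apply: rP | rewrite fC ?r_idem // rC].
- by exists x; [apply: tailP | rewrite /f xS].
rewrite /f; case: ifPn => xt; [right | left]; apply: imset_f => //.
exact: PC.
Qed.

Lemma levels_setU_tail A X :
  A \subset level P 0 -> A != set0 -> X \subset tail ->
  level (A :|: X) 0 = A /\ level (A :|: X) 1 = level X 0.
Proof.
move=> A0 /set0Pn[a aA] Xt.
have XnA : [disjoint X & A].
  apply/pred0P => x /=; apply/negP => /andP[/(subsetP Xt)].
  by rewrite mem_tail inE => /andP[/norP[/negP x0 _] _] /(subsetP A0).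
have AX0 : level (A :|: X) 0 = A.
  apply/setP => z; apply/minsetP/idP => [[/setUP[//|zX] minz]|zA].
    move: (minz a); rewrite inE aA => /(_ isT).
    by rewrite level0_lt_tail // ?(subsetP A0) ?(subsetP Xt).
  have /minsetP[_ minz] := subsetP A0 z zA.
  split=> [|y /setUP[/(subsetP A0)/level_mem|/(subsetP Xt)/(subsetP (rest_sub P 2))]];
    by rewrite ?inE ?zA //; apply: minz.
split=> //; rewrite /level /= -[minset (A :|: X)]/(level (A :|: X) 0) AX0.
by rewrite setDUl setDv set0U; congr minset; apply/setDidPl.
Qed.

Lemma tail_retract_crown :
  (exists x0 x1, [/\ x0 != x1, x0 \in level P 0, x1 \in level P 0 &
                    is_retract le C [set x0; x1]]) ->
  (exists R', is_retract le tail R' /\ antichain2 le (level R' 0)) ->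
  exists R, is_retract le P R /\ crown4 le (level R 0 :|: level R 1).
Proof.
case=> x0 [x1 [nx01 x0_0 x1_0 retrC]] [X [retrT /antichain2_levelP[t0 [t1 [nt01 X0E]]]]].
have A0 : [set x0; x1] \subset level P 0 by apply/subsetP => z /set2P[]->.
have Xt : X \subset tail.
  by case: retrT => g [gt _ _ ->]; apply/subsetP => _ /imsetP[y yt ->]; apply: gt.
have An0 : [set x0; x1] != set0 by apply/set0Pn; exists x0; rewrite !inE eqxx.
have [RL0 RL1] := levels_setU_tail A0 An0 Xt.
exists ([set x0; x1] :|: X); split; first exact: glue_retract.
apply/crown4_levels01P; exists x0, x1, t0, t1; split; rewrite ?RL1 //.
move=> a t aA tX; apply: level0_lt_tail; first exact: subsetP A0 a aA.
by apply: (subsetP Xt); rewrite -X0E in tX; apply: level_mem tX.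
Qed.

End Tail.
End PosetLevels.

Theorem corollary4p6 (h : nat) (le : rel (sec_carrier h)) :
  in_N2 le ->
  let P := segment le setT 1 (height le setT).-1 in
  2 <= height le P ->
  type3C le (level le P 0 :|: level le P 1) ->
  (exists R, is_retract le P R /\ crown4 le (level le R 0 :|: level le R 1)) <->
  (exists T, is_retract le (segment le P 2 (height le P)) T /\
             antichain2 le (level le T 0)).
Proof.
move=> [[[le_po _ _] _] _ _ hor2] P _ P3C.
have tail_lt : {in level le P 0 & rest le P 2, forall x y, lt le x y}.
  exact: horizon2_segment_level0_lt_rest2.
rewrite segment_height //; split.
  exact: crown_retract_tail (type3C_lt_inj P3C).
exact: tail_retract_crown (type3C_retract le_po P3C).
Qed.
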